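(* For every integer $k\geq 1$, $$G_k(x)=\frac{1+2x\sum_{0\le j\le k-1,\; j\equiv k \pmod 2}C(k,j)4^{j}G_j(x)}{1-2^{k}(2^{k+1}+1)x}.$$ In particular, if $k$ is even then $G_k(x)$ is expressed (with rational-function coefficients, plus a rational function) through $G_0,G_2,\dots,G_{k-2}$ only, and if $k$ is odd then through $G_1,G_3,\dots,G_{k-2}$ only.
   Context: The Stern polynomials $B_n(t)\in\mathbb{Z}[t]$ are defined by $B_0(t)=0$, $B_1(t)=1$, and for $n\geq 1$: $B_{2n}(t)=tB_n(t)$, $B_{2n+1}(t)=B_n(t)+B_{n+1}(t)$. For $n\geq1$ let $e(n)=\deg B_n(t)$. For $k,n\geq 0$ let $S_k(n)=\sum_{a\geq 1:\;e(a)=n}a^{k}$ (a finite sum) and $G_k(x)=\sum_{a=1}^{\infty}a^{k}x^{e(a)}=\sum_{n=0}^{\infty}S_k(n)x^n$. $C(k,j)=\binom{k}{j}$. *)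

From HB Require Import structures.
From mathcomp Require Import all_boot all_order all_algebra.
Set Implicit Arguments. Unset Strict Implicit. Unset Printing Implicit Defensive.
Import Order.TTheory GRing.Theory Num.Theory.
Local Open Scope ring_scope.

(* Stern polynomials, via fuel: Bf fuel n = B_n whenever fuel >= n.
   B_0 = 0, B_1 = 1, B_{2m} = t B_m, B_{2m+1} = B_m + B_{m+1}. *)
Fixpoint Bf (fuel n : nat) : {poly int} :=
  match fuel with
  | 0%N => 0
  | f.+1 =>
      if n == 0%N then 0
      else if n == 1%N then 1
      else if odd n then Bf f n./2 + Bf f n./2.+1
      else 'X * Bf f n./2
  end.

Definition B (n : nat) : {poly int} := Bf n n.

Definition e (n : nat) : nat := (size (B n)).-1.

(* s is the (finite) sum S_k(n) = sum_{a >= 1, e(a) = n} a^k : M bounds the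
   finite index set, and the value of the truncated sum does not depend on
   the choice of such a bound M. *)
Definition is_S (k n s : nat) : Prop :=
  exists M : nat, (forall a : nat, (0 < a)%N -> e a = n -> (a < M)%N) /\
    s = (\sum_(1 <= a < M | e a == n) a ^ k)%N.

Definition fps := nat -> int.
Definition fps_mul (f g : fps) : fps :=
  fun n => \sum_(i < n.+1) f i * g (n - i)%N.
Definition fps_add (f g : fps) : fps := fun n => f n + g n.
Definition fps_scale (c : int) (f : fps) : fps := fun n => c * f n.
Definition fps_const (c : int) : fps := fun n => if n == 0%N then c else 0.
Definition fps_X : fps := fun n => if n == 1%N then 1 else 0.
Definition fps_sum (m : nat) (P : pred nat) (F : nat -> fps) : fps :=
  fun n => \sum_(j < m | P j) F j n.

(* G_k(x) = sum_n S_k(n) x^n, given the family of coefficients S. *)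
Definition G (S : nat -> nat -> nat) (k : nat) : fps := fun n => (S k n)%:Z.

From HB Require Import structures.
From mathcomp Require Import all_boot all_order all_algebra.
From mathcomp Require Import zify ring.
From Stdlib Require Import FunctionalExtensionality.
Import Order.TTheory GRing.Theory Num.Theory.
Local Open Scope ring_scope.

(* The proof reads the identity coefficientwise.  The degree e of the Stern
   polynomials satisfies e(1) = 0 and, for b >= 1,
     e(2b) = e(4b+1) = e(4b-1) = e(b) + 1,
   and every a > 1 arises from a unique smaller b >= 1 in one of these three
   ways.  Hence level n+1 of e is the set of "children" 2b, 4b+1, 4b-1 of
   level n (levels are finite, bounded by 4^(n+1)), so that
     S_k(n+1) = sum_{e(b) = n} ((2b)^k + (4b+1)^k + (4b-1)^k),
   and the binomial theorem turns the summand into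
   2^k (2^(k+1)+1) b^k + 2 sum_{j<k, j = k mod 2} C(k,j) 4^j b^j.
   Together with S_k(0) = 1 this recursion is exactly the coefficient
   identity of the power series. *)

Lemma Bf_fuel_irrelevant f1 f2 n :
  (n <= f1)%N -> (n <= f2)%N -> Bf f1 n = Bf f2 n.
Proof.
elim: f1 f2 n => [|f1 IH] [|f2] n //= h1 h2; try by have -> : n = 0%N by lia.
case: eqP => // n_neq0; case: eqP => // n_neq1.
have := odd_double_half n; case: ifP => odd_n /= n_eq.
  by rewrite (IH f2) ?(IH f2 n./2.+1) //; lia.
by rewrite (IH f2) //; lia.
Qed.

Lemma Bf_succ f n : Bf f.+1 n =
  if n == 0%N then 0 else if n == 1%N then 1
  else if odd n then Bf f n./2 + Bf f n./2.+1 else 'X * Bf f n./2.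
Proof. by []. Qed.

Lemma B_double m : (0 < m)%N -> B m.*2 = 'X * B m.
Proof.
move=> m_gt0; rewrite /B (Bf_fuel_irrelevant _ (m.*2).+1) // Bf_succ.
have [-> ->] : (m.*2 == 0%N) = false /\ (m.*2 == 1%N) = false by split; lia.
by rewrite odd_double doubleK (Bf_fuel_irrelevant m.*2 m m) //; lia.
Qed.

Lemma B_double_succ m : (0 < m)%N -> B m.*2.+1 = B m + B m.+1.
Proof.
move=> m_gt0; rewrite /B (Bf_fuel_irrelevant _ (m.*2.+1).+1) // Bf_succ.
have [-> ->] : (m.*2.+1 == 0%N) = false /\ (m.*2.+1 == 1%N) = false by split; lia.
have -> : (m.*2.+1)./2 = m by rewrite -divn2; lia.
have -> : odd m.*2.+1 by rewrite /= odd_double.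
rewrite (Bf_fuel_irrelevant m.*2.+1 m m) //; last lia.
by rewrite (Bf_fuel_irrelevant m.*2.+1 m.+1 m.+1) //; lia.
Qed.

Lemma lead_coef_gt0D {R : numDomainType} {p q : {poly R}} :
  0 < lead_coef p -> 0 < lead_coef q ->
  0 < lead_coef (p + q) /\ size (p + q) = maxn (size p) (size q).
Proof.
move=> p_gt0 q_gt0; case: (ltngtP (size p) (size q)) => size_pq.
- by rewrite addrC lead_coefDl ?size_polyDl // (maxn_idPr (ltnW size_pq)).
- by rewrite lead_coefDl ?size_polyDl // (maxn_idPl (ltnW size_pq)).
have top_coef : (p + q)`_(size p).-1 = lead_coef p + lead_coef q.
  by rewrite coefD !lead_coefE size_pq.
have top_gt0 : 0 < (p + q)`_(size p).-1 by rewrite top_coef addr_gt0.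
have size_sum : size (p + q) = size p.
  apply/anti_leq/andP; split.
    by rewrite -[X in (_ <= X)%N]maxnn {2}size_pq size_polyD.
  have size_p_gt0 : (0 < size p)%N by rewrite lt0n size_poly_eq0 -lead_coef_eq0 gt_eqF.
  rewrite leqNgt; apply/negP => small_sum.
  have top_eq0 : (p + q)`_(size p).-1 = 0 by apply: nth_default; rewrite -ltnS prednK.
  by rewrite top_eq0 ltxx in top_gt0.
by rewrite lead_coefE size_sum.
Qed.

Lemma B1 : B 1 = 1.
Proof. by []. Qed.

(* Every B_n with n >= 1 is a nonzero polynomial with positive leading
   coefficient; this is what makes e behave additively along the recursion. *)
Lemma B_lead_gt0 n : (0 < n)%N -> 0 < lead_coef (B n).
Proof.
elim/ltn_ind: n => n IH n_gt0; have := odd_double_half n.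
have [half_eq0|half_gt0] := posnP n./2.
  rewrite half_eq0 => n_eq; have -> : n = 1%N by lia.
  by rewrite B1 lead_coef1.
case: (odd n) => /= n_eq.
  rewrite -n_eq add1n B_double_succ //.
  have lt_half : (n./2 < n)%N by lia.
  have lt_half_succ : (n./2.+1 < n)%N by lia.
  by case: (lead_coef_gt0D (IH _ lt_half half_gt0) (IH _ lt_half_succ isT)).
by rewrite -n_eq add0n B_double // mulrC lead_coefMX IH //; lia.
Qed.

Lemma B_neq0 n : (0 < n)%N -> B n != 0.
Proof. by move=> /B_lead_gt0; rewrite -lead_coef_eq0 => /gt_eqF ->. Qed.

Lemma e1 : e 1 = 0%N.
Proof. by rewrite /e B1 size_poly1. Qed.

Lemma e_double m : (0 < m)%N -> e m.*2 = (e m).+1.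
Proof.
move=> m_gt0; rewrite /e B_double // mulrC size_mulX ?B_neq0 //=.
by rewrite prednK // lt0n size_poly_eq0 B_neq0.
Qed.

Lemma e_double_succ m : (0 < m)%N -> e m.*2.+1 = maxn (e m) (e m.+1).
Proof.
move=> m_gt0; rewrite /e B_double_succ //.
have size_sum : size (B m + B m.+1) = maxn (size (B m)) (size (B m.+1)).
  by case: (lead_coef_gt0D (B_lead_gt0 _ m_gt0) (B_lead_gt0 _ (ltn0Sn m))).
have := size_poly_gt0 (B m); have := size_poly_gt0 (B m.+1).
by rewrite size_sum !B_neq0 // -!subn1; lia.
Qed.

Lemma e_succ_close n :
  (0 < n)%N -> (e n.+1 <= (e n).+1)%N /\ (e n <= (e n.+1).+1)%N.
Proof.
elim/ltn_ind: n => n IH n_gt0; have n_eq := odd_double_half n.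
have [half_eq0|half_gt0] := posnP n./2.
  rewrite half_eq0 in n_eq; have -> : n = 1%N by lia.
  by rewrite (e_double 1 isT) e1.
have [IH1 IH2] : (e n./2.+1 <= (e n./2).+1)%N /\ (e n./2 <= (e n./2.+1).+1)%N.
  by apply: IH => //; rewrite -divn2 ltn_Pdiv.
move: (odd n) (n./2) n_eq half_gt0 IH1 IH2 => [] m <- m_gt0 IH1 IH2; clear IH.
  by rewrite add1n -doubleS e_double // e_double_succ //; lia.
by rewrite add0n e_double // e_double_succ //; lia.
Qed.

Lemma e_4succ b : (0 < b)%N -> e (4 * b + 1) = (e b).+1.
Proof.
move=> b_gt0; have -> : (4 * b + 1 = (b.*2).*2.+1)%N by lia.
have [close _] := e_succ_close _ b_gt0.
by rewrite e_double_succ ?double_gt0 // e_double // e_double_succ //; lia.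
Qed.

Lemma e_4pred b : (0 < b)%N -> e (4 * b - 1) = (e b).+1.
Proof.
move=> b_gt0; have -> : (4 * b - 1 = (b.*2.-1).*2.+1)%N by lia.
rewrite e_double_succ; last lia.
have -> : (b.*2.-1).+1 = b.*2 by lia.
rewrite e_double //; have [->|b_neq1] := eqVneq b 1%N; first by rewrite [1.*2.-1]/= e1.
have -> : b.*2.-1 = (b.-1).*2.+1 by lia.
rewrite e_double_succ; last lia.
have [_ close] : (e b.-1.+1 <= (e b.-1).+1)%N /\ (e b.-1 <= (e b.-1.+1).+1)%N.
  by apply: e_succ_close; lia.
by rewrite (_ : (b.-1).+1 = b) in close *; lia.
Qed.

Lemma e_parent a : (1 < a)%N ->
  exists b, [/\ (0 < b)%N, (b < a)%N, (a <= 4 * b + 1)%N & e a = (e b).+1].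
Proof.
move=> a_gt1; have := odd_double_half a; move: (a./2) => h.
case: (odd a) => /= a_eq; rewrite -a_eq; last first.
  exists h; rewrite add0n e_double; last lia.
  by split; lia.
have := odd_double_half h; move: (h./2) => g.
case: (odd h) => /= h_eq; rewrite -h_eq.
  exists g.+1; rewrite -e_4pred //; split; try lia.
  by congr e; rewrite -!muln2; lia.
exists g; rewrite -e_4succ; last lia.
by split; try lia; congr e; rewrite -!muln2; lia.
Qed.

Definition on_level (n a : nat) : bool := (0 < a)%N && (e a == n).

Lemma on_level0 a : on_level 0 a = (a == 1%N).
Proof.
rewrite /on_level; have [->|a_neq1] := eqVneq a 1%N; first by rewrite e1.
have [->|a_gt0] := posnP a; first by [].
have a_gt1 : (1 < a)%N by lia.
by have [b [_ _ _ ->]] := e_parent _ a_gt1.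
Qed.

Lemma on_level_lt n a : on_level n a -> (a < 4 ^ n.+1)%N.
Proof.
move=> /andP[+ /eqP <-]; elim/ltn_ind: a => a IH a_gt0.
have [a_le1|a_gt1] := leqP a 1%N.
  have -> : a = 1%N by lia.
  by rewrite e1.
have [b [b_gt0 lt_ba a_le ->]] := e_parent _ a_gt1.
by have := IH b lt_ba b_gt0; rewrite (expnS 4 (e b).+1); lia.
Qed.

Lemma on_level_double n c : on_level n.+1 (2 * c) = on_level n c.
Proof.
rewrite /on_level; have [->|c_gt0] := posnP c; first by [].
by rewrite mul2n e_double // eqSS double_gt0 c_gt0.
Qed.

Lemma on_level_4succ n b : on_level n.+1 (4 * b + 1) = on_level n b.
Proof.
rewrite /on_level; have [->|b_gt0] := posnP b; first by rewrite e1.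
by rewrite e_4succ // eqSS addn1.
Qed.

Lemma on_level_4pred n b : on_level n.+1 (4 * b - 1) = on_level n b.
Proof.
rewrite /on_level; have [->|b_gt0] := posnP b; first by [].
by rewrite e_4pred // eqSS (_ : 0 < 4 * b - 1 = true)%N //; lia.
Qed.

Lemma sum_bounded_support {R : nmodType} (P : pred nat) (F : nat -> R) N1 N2 :
  (forall a, P a -> (a < N1)%N) -> (forall a, P a -> (a < N2)%N) ->
  \sum_(0 <= a < N1 | P a) F a = \sum_(0 <= a < N2 | P a) F a.
Proof.
wlog le_N12 : N1 N2 / (N1 <= N2)%N.
  move=> wlog_le lt1 lt2; have [le12|/ltnW le21] := leqP N1 N2; first exact: wlog_le.
  by symmetry; apply: wlog_le.
move=> P_lt1 _.
rewrite (big_nat_widen _ _ _ _ _ le_N12); apply: eq_bigl => a.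
by case P_a: (P a) => //=; rewrite P_lt1.
Qed.

Lemma sum_blocks {R : nmodType} (m M : nat) (g : nat -> R) :
  \sum_(0 <= a < m * M) g a = \sum_(0 <= b < M) \sum_(0 <= r < m) g (m * b + r)%N.
Proof.
elim: M => [|M IH]; first by rewrite muln0 !big_geq.
rewrite big_nat_recr //= -IH mulnS addnC (big_cat_nat _ (leq_addr _ _)) //=.
congr (_ + _); rewrite -{1}[(m * M)%N]add0n big_addn addKn.
by apply: eq_bigr => r _; rewrite addnC.
Qed.

Definition level_sum (n : nat) (f : nat -> int) : int :=
  \sum_(0 <= a < 4 ^ n.+1 | on_level n a) f a.

Lemma level_sum_bound n f N : (forall a, on_level n a -> (a < N)%N) ->
  \sum_(0 <= a < N | on_level n a) f a = level_sum n f.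
Proof. by move=> lt_N; apply: sum_bounded_support => // a /on_level_lt. Qed.

Lemma level_sum0 f : level_sum 0 f = f 1%N.
Proof.
rewrite -(@level_sum_bound 0 f 2) => [|a]; last by rewrite on_level0 => /eqP ->.
by rewrite big_mkcond !big_nat_recr // big_geq // !on_level0 /= !add0r.
Qed.

Lemma eq_level_sum n f g : (forall a, on_level n a -> f a = g a) ->
  level_sum n f = level_sum n g.
Proof. exact: eq_bigr. Qed.

Lemma level_sumD n f g :
  level_sum n (fun a => f a + g a) = level_sum n f + level_sum n g.
Proof. exact: big_split. Qed.

Lemma level_sum_succ n f : level_sum n.+1 f =
  level_sum n (fun b => f (2 * b)%N + f (4 * b + 1)%N + f (4 * b - 1)%N).
Proof.
set M := (4 ^ n.+1)%N; set g := fun a => if on_level n.+1 a then f a else 0.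
have lt_M : forall a, on_level n a -> (a < M)%N by move=> a /on_level_lt.
have doubles : \sum_(0 <= b < M) (g (4 * b)%N + g (4 * b + 2)%N) =
    level_sum n (fun c => f (2 * c)%N).
  rewrite -(@level_sum_bound _ _ (2 * M)) => [|a /lt_M]; last lia.
  rewrite [RHS]big_mkcond [RHS](sum_blocks 2).
  apply: eq_bigr => b _; rewrite !big_nat_recr // big_geq // /g /= add0r addn0.
  by rewrite -!(on_level_double n) mulnDr !mulnA muln1.
have succs : \sum_(0 <= b < M) g (4 * b + 1)%N = level_sum n (fun b => f (4 * b + 1)%N).
  rewrite -(@level_sum_bound _ _ M) // [RHS]big_mkcond; apply: eq_bigr => b _.
  by rewrite /g on_level_4succ.
have preds : \sum_(0 <= b < M) g (4 * b + 3)%N = level_sum n (fun b => f (4 * b - 1)%N).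
  rewrite -(@level_sum_bound _ _ M.+1) => [|a /lt_M]; last lia.
  rewrite [RHS]big_mkcond big_nat_recl // /= add0r; apply: eq_bigr => b _.
  by rewrite /g -(on_level_4pred n) (_ : (4 * b.+1 - 1 = 4 * b + 3)%N) //; lia.
rewrite !level_sumD -doubles -succs -preds /level_sum expnS -/M big_mkcond -/g.
rewrite sum_blocks -!big_split; apply: eq_bigr => b _.
by rewrite !big_nat_recr // big_geq //= add0r addn0; ring.
Qed.

Lemma binomial_plus_minus {R : comRingType} (x : R) k :
  (x + 1) ^+ k + (x - 1) ^+ k =
  2 * x ^+ k + 2 * \sum_(i < k | odd i == odd k) 'C(k, i)%:R * x ^+ i.
Proof.
rewrite [x + 1]addrC [x - 1]addrC !exprDn -big_split big_ord_recr /= addrC.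
rewrite subnn binn !expr0 !mul1r; congr (_ + _); first ring.
rewrite mulr_sumr [RHS]big_mkcond; apply: eq_bigr => i _.
have le_ik : (i <= k)%N by apply: ltnW.
rewrite expr1n mul1r -signr_odd oddB //.
by case: (odd i); case: (odd k); rewrite /= ?expr0 ?expr1; ring.
Qed.

Lemma children_powers {R : comRingType} (y : R) k :
  (2 * y) ^+ k + (4 * y + 1) ^+ k + (4 * y - 1) ^+ k =
  (2 ^ k * (2 ^ k.+1 + 1))%N%:R * y ^+ k +
  2 * \sum_(j < k | odd j == odd k) ('C(k, j) * 4 ^ j)%N%:R * y ^+ j.
Proof.
have four : (4 : R) = 2 * 2 by rewrite -natrM.
have low_terms : \sum_(j < k | odd j == odd k) 'C(k, j)%:R * (4 * y) ^+ j =
    \sum_(j < k | odd j == odd k) ('C(k, j) * 4 ^ j)%N%:R * y ^+ j.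
  by apply: eq_bigr => j _; rewrite natrM natrX exprMn mulrA.
rewrite -addrA binomial_plus_minus low_terms natrM !natrX natrD natrX exprS.
by rewrite !exprMn four exprMn; ring.
Qed.

Definition power_sum (j n : nat) : int := level_sum n (fun a => a%:R ^+ j).

Lemma is_S_power_sum j n s : is_S j n s -> s%:Z = power_sum j n.
Proof.
move=> [M [lt_M ->]]; rewrite /power_sum -(@level_sum_bound _ _ M); last first.
  by move=> a /andP[a_gt0 /eqP]; apply: lt_M.
rewrite -natz natr_sum (@big_nat_widenl _ _ _ 1 0) //.
by apply: eq_big => [a|a _]; rewrite ?natrX // /on_level andbC.
Qed.

Lemma power_sum_level0 j : power_sum j 0 = 1.
Proof. by rewrite /power_sum level_sum0 expr1n. Qed.

Lemma power_sum_succ k n : power_sum k n.+1 =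
  (2 ^ k * (2 ^ k.+1 + 1))%N%:R * power_sum k n +
  2 * \sum_(j < k | odd j == odd k) ('C(k, j) * 4 ^ j)%N%:R * power_sum j n.
Proof.
rewrite /power_sum level_sum_succ.
rewrite (@eq_level_sum n _ (fun b => (2 ^ k * (2 ^ k.+1 + 1))%N%:R * b%:R ^+ k +
    2 * \sum_(j < k | odd j == odd k) ('C(k, j) * 4 ^ j)%N%:R * b%:R ^+ j)); last first.
  move=> b /andP[b_gt0 _]; rewrite -children_powers natrM natrD natrB ?natrM //; lia.
rewrite level_sumD /level_sum -!mulr_sumr; congr (_ + 2 * _).
by rewrite exchange_big; apply: eq_bigr => j _; rewrite mulr_sumr.
Qed.

Lemma fps_mul_1_plus_cX (f : fps) c n :
  fps_mul f (fps_add (fps_const 1) (fps_scale c fps_X)) n =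
  f n + (if n is m.+1 then c * f m else 0).
Proof.
rewrite /fps_mul /fps_add /fps_const /fps_scale /fps_X; case: n => [|m].
  by rewrite big_ord1 /= mulr0 !addr0 mulr1.
rewrite big_ord_recr big_ord_recr /= subnn subSnn /= big1 => [|i _]; first ring.
have [-> ->] : (m.+1 - i == 0)%N = false /\ (m.+1 - i == 1)%N = false.
  by have := ltn_ord i; split; lia.
by rewrite mulr0 addr0 mulr0.
Qed.

Lemma fps_mul_cX (c : int) (g : fps) n :
  fps_mul (fps_scale c fps_X) g n = if n is m.+1 then c * g m else 0.
Proof.
rewrite /fps_mul /fps_scale /fps_X; case: n => [|m].
  by rewrite big_ord1 mulr0 mul0r.
rewrite big_ord_recl big_ord_recl /= big1 => [|i _].
  by rewrite mulr1 subn1 mulr0 mul0r add0r addr0.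
by rewrite /= mulr0 mul0r.
Qed.

(* Coefficient 0 is S_k(0) = 1 on both sides; coefficient n+1 is the
   recursion power_sum_succ. *)
Theorem mainTheorem9 (k : nat) (hk : (1 <= k)%N) :
  (forall n : nat, exists M : nat,
      forall a : nat, (0 < a)%N -> e a = n -> (a < M)%N) /\
  (forall S : nat -> nat -> nat,
    (forall j n : nat, is_S j n (S j n)) ->
    fps_mul (G S k)
            (fps_add (fps_const 1)
                     (fps_scale (- ((2 ^ k * (2 ^ k.+1 + 1))%N)%:Z) fps_X))
    = fps_add (fps_const 1)
        (fps_mul (fps_scale 2 fps_X)
           (fps_sum k (fun j => odd j == odd k)
              (fun j => fps_scale (('C(k, j) * 4 ^ j)%N)%:Z (G S j))))).
Proof.
split=> [n|S S_spec].
  exists (4 ^ n.+1)%N => a a_gt0 e_a; apply: on_level_lt.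
  by rewrite /on_level a_gt0 e_a eqxx.
have S_eq j n : (S j n)%:Z = power_sum j n by apply: is_S_power_sum.
apply: functional_extensionality => n.
rewrite fps_mul_1_plus_cX /fps_add /fps_const fps_mul_cX /G.
case: n => [|m] /=; first by rewrite S_eq power_sum_level0 addr0.
rewrite /fps_sum /fps_scale; under eq_bigr => j _ do rewrite S_eq -natz.
by rewrite !S_eq power_sum_succ -[Posz (2 ^ k * _)]natz; ring.
Qed.
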